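(* Let $(X,d)$ be a compact metric space and $F$ a semiflow on $X$. For all $x,y\in X$, if $x\succcurlyeq_{\mathcal C} y$ then $x\succcurlyeq_{\mathcal S} y$. In particular $\mathcal R_{\mathcal C}\subset\mathcal R_{\mathcal S}$.
   Context: A semiflow on a metric space $(X,d)$ is a continuous map $F:[0,\infty)\times X\to X$, $(t,x)\mapsto F^t(x)$, with $F^0=\mathrm{id}$ and $F^{t+s}=F^t\circ F^s$ for all $t,s\ge0$. A curve is piecewise continuous if it is continuous except at finitely many points, at which one-sided limits exist. Conley chains: for $\varepsilon>0$, $T>0$, an $(\varepsilon,T)$-chain from $x$ to $y$ is a finite sequence $x=x_0,\dots,x_N=y$ in $X$ with times $t_i\ge T$ such that $d(F^{t_i}(x_i),x_{i+1})<\varepsilon$ for $i=0,\dots,N-1$. Write $x\succcurlyeq_{\mathcal C} y$ if for every $\varepsilon>0$ and $T>0$ there is an $(\varepsilon,T)$-chain from $x$ to $y$. Shadow chains: for $T\ge1$, a piecewise continuous $\gamma:[0,T]\to X$ is $\varepsilon$-close to $F$ if $d(\gamma(t+\tau),F^\tau(\gamma(t)))<\varepsilon$ for every $\tau\in[0,1]$ and $t\in[0,T-\tau]$. An $\varepsilon$-chain from $x$ to $y$ is such a $\gamma$ with $\gamma(0)=x$, $\gamma(T)=y$. Write $x\succcurlyeq_{\mathcal S} y$ if for every $\varepsilon>0$ there is an $\varepsilon$-chain from $x$ to $y$. For $\star\in\{\mathcal C,\mathcal S\}$: $x$ is $\star$-chain-recurrent if $x$ is a fixed point of $F$ or there is $y$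 with $x\succcurlyeq_\star y$ and $y\succcurlyeq_\star x$; $\mathcal R_\star$ denotes the set of $\star$-chain-recurrent points. *)

From Stdlib Require Import Reals Lra List.
Open Scope R_scope.

Section Defs.
Variables (X : Type) (d : X -> X -> R).

Definition is_metric : Prop :=
  (forall x y, 0 <= d x y) /\
  (forall x y, d x y = 0 <-> x = y) /\
  (forall x y, d x y = d y x) /\
  (forall x y z, d x z <= d x y + d y z).

Definition open_set (U : X -> Prop) : Prop :=
  forall x, U x -> exists e, 0 < e /\ forall y, d x y < e -> U y.

Definition compact_space : Prop :=
  forall (I : Type) (U : I -> X -> Prop),
    (forall i, open_set (U i)) ->
    (forall x, exists i, U i x) ->
    exists l : list I, forall x, exists i, In i l /\ U i x.

Definition is_semiflow (F : R -> X -> X) : Prop :=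
  (forall t x, 0 <= t -> forall e, 0 < e -> exists del, 0 < del /\
     forall s y, 0 <= s -> Rabs (s - t) < del -> d x y < del ->
       d (F t x) (F s y) < e) /\
  (forall x, F 0 x = x) /\
  (forall t s x, 0 <= t -> 0 <= s -> F (t + s) x = F t (F s x)).

Definition conley_chain (F : R -> X -> X) (e T : R) (x y : X) : Prop :=
  exists (N : nat) (xs : nat -> X) (ts : nat -> R),
    (1 <= N)%nat /\ xs 0%nat = x /\ xs N = y /\
    forall i, (i < N)%nat -> T <= ts i /\ d (F (ts i) (xs i)) (xs (S i)) < e.

Definition conley_le (F : R -> X -> X) (x y : X) : Prop :=
  forall e T, 0 < e -> 0 < T -> conley_chain F e T x y.

Definition cont_within_at (a b : R) (g : R -> X) (t : R) : Prop :=
  forall e, 0 < e -> exists del, 0 < del /\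
    forall s, a <= s <= b -> Rabs (s - t) < del -> d (g s) (g t) < e.

Definition left_limit_exists (a : R) (g : R -> X) (p : R) : Prop :=
  exists L, forall e, 0 < e -> exists del, 0 < del /\
    forall s, a <= s < p -> p - del < s -> d (g s) L < e.

Definition right_limit_exists (b : R) (g : R -> X) (p : R) : Prop :=
  exists L, forall e, 0 < e -> exists del, 0 < del /\
    forall s, p < s <= b -> s < p + del -> d (g s) L < e.

Definition piecewise_continuous (T : R) (g : R -> X) : Prop :=
  exists P : list R,
    (forall t, 0 <= t <= T -> ~ In t P -> cont_within_at 0 T g t) /\
    (forall p, In p P -> 0 <= p <= T ->
       (0 < p -> left_limit_exists 0 g p) /\
       (p < T -> right_limit_exists T g p)).

Definition eps_close (F : R -> X -> X) (e T : R) (g : R -> X) : Prop :=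
  forall tau t, 0 <= tau <= 1 -> 0 <= t <= T - tau ->
    d (g (t + tau)) (F tau (g t)) < e.

Definition shadow_chain (F : R -> X -> X) (e : R) (x y : X) : Prop :=
  exists (T : R) (g : R -> X),
    1 <= T /\ piecewise_continuous T g /\ eps_close F e T g /\
    g 0 = x /\ g T = y.

Definition shadow_le (F : R -> X -> X) (x y : X) : Prop :=
  forall e, 0 < e -> shadow_chain F e x y.

Definition fixed_point (F : R -> X -> X) (x : X) : Prop :=
  forall t, 0 <= t -> F t x = x.

Definition chain_recurrent (rel : X -> X -> Prop) (F : R -> X -> X) (x : X) : Prop :=
  fixed_point F x \/ exists y, rel x y /\ rel y x.

Definition R_C (F : R -> X -> X) (x : X) : Prop := chain_recurrent (conley_le F) F x.
Definition R_S (F : R -> X -> X) (x : X) : Prop := chain_recurrent (shadow_le F) F x.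

End Defs.

(* A Conley (e,T)-chain with jump times t_i >= 1 is turned into a shadow chain by following
   the orbit of x_i for time t_i and then jumping to x_(i+1).  The concatenated curve is
   piecewise continuous with breaks at the partial sums of the t_i.  Since consecutive
   breaks are at least 1 apart, any window [t, t + tau] with tau <= 1 meets at most one
   jump, and across a jump the error is d(F^r(x_(i+1)), F^r(F^(t_i)(x_i))) with r <= tau.
   Compactness makes F^r, 0 <= r <= 1, uniformly equicontinuous, so a small enough jump
   size keeps this error below e. *)
From Pilot Require Import Defs.
From Stdlib Require Import Reals Lra Lia List Arith Classical.
Open Scope R_scope.

Section Metric.
Variables (X : Type) (d : X -> X -> R).
Hypothesis Hmet : is_metric X d.

Lemma dist_self x : d x x = 0.
Proof. apply (proj1 (proj2 Hmet)); reflexivity. Qed.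

Lemma dist_sym x y : d x y = d y x.
Proof. apply Hmet. Qed.

Lemma dist_triangle x y z : d x z <= d x y + d y z.
Proof. apply Hmet. Qed.

Lemma ball_open y r : Defs.open_set X d (fun z => d y z < r).
Proof.
  intros z Hz; exists (r - d y z); split; [lra|].
  intros w Hw; pose proof (dist_triangle y z w); lra.
Qed.

End Metric.

Lemma list_pos_lower_bound (l : list R) :
  (forall r, In r l -> 0 < r) -> exists del, 0 < del /\ forall r, In r l -> del <= r.
Proof.
  induction l as [|a l IH]; intros Hpos.
  - exists 1; split; [lra | intros r []].
  - destruct IH as [del [Hdel Hl]]; [intros r Hr; apply Hpos; right; exact Hr|].
    exists (Rmin del a); split; [apply Rmin_glb_lt; auto; apply Hpos; left; auto|].
    intros r [<- | Hr]; [apply Rmin_r|].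
    pose proof (Rmin_l del a); pose proof (Hl r Hr); lra.
Qed.

Section Semiflow.
Variables (X : Type) (d : X -> X -> R) (F : R -> X -> X).
Hypotheses (Hmet : is_metric X d) (Hsf : is_semiflow X d F).

Lemma semiflow_continuous t x : 0 <= t -> forall e, 0 < e -> exists del, 0 < del /\
  forall s y, 0 <= s -> Rabs (s - t) < del -> d x y < del -> d (F t x) (F s y) < e.
Proof. apply Hsf. Qed.

Lemma semiflow_zero x : F 0 x = x.
Proof. apply Hsf. Qed.

Lemma semiflow_add t s x : 0 <= t -> 0 <= s -> F (t + s) x = F t (F s x).
Proof. apply Hsf. Qed.

(* Compactness of [0,1] by a supremum argument: continuity at (m, y), m the supremum of the
   good times u, shows that m + del/2 is good as well. *)
Lemma semiflow_equicontinuous_at y e : 0 < e -> exists r, 0 < r /\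
  forall z, d y z < r -> forall s, 0 <= s <= 1 -> d (F s y) (F s z) < e.
Proof.
  intros He.
  set (good := fun u => exists r, 0 < r /\
    forall z, d y z < r -> forall s, 0 <= s <= u -> d (F s y) (F s z) < e).
  set (E := fun u => 0 <= u <= 1 /\ good u).
  assert (HE0 : E 0).
  { split; [lra|]. destruct (semiflow_continuous 0 y (Rle_refl 0) e He) as [del [Hdel Hc]].
    exists del; split; auto. intros z Hz s Hs. replace s with 0 by lra.
    apply Hc; [lra | rewrite Rminus_0_r, Rabs_R0 | ]; auto. }
  destruct (completeness E) as [m [Hub Hlub]]; [exists 1; intros u [Hu _]; lra | now exists 0|].
  assert (Hm : 0 <= m <= 1) by (split; [apply Hub; auto | apply Hlub; intros u [Hu _]; lra]).
  destruct (semiflow_continuous m y ltac:(lra) (e / 2) ltac:(lra)) as [del [Hdel Hc]].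
  assert (Hnear : exists u, E u /\ m - del / 2 < u).
  { apply NNPP; intros Hn. enough (m <= m - del / 2) by lra.
    apply Hlub; intros u Hu; apply Rnot_lt_le; intros Hlt; apply Hn; eauto. }
  destruct Hnear as [u [[Hu [r [Hr Hgood]]] Hum]].
  set (v := Rmin 1 (m + del / 2)).
  assert (Hv : good v).
  { exists (Rmin r del); split; [apply Rmin_glb_lt; auto|].
    intros z Hz s Hs. pose proof (Rmin_l r del); pose proof (Rmin_r r del).
    destruct (Rle_dec s u); [apply Hgood; lra|].
    pose proof (Rmin_r 1 (m + del / 2)).
    assert (Hsm : Rabs (s - m) < del) by (apply Rabs_def1; unfold v in Hs; lra).
    assert (d (F m y) (F s y) < e / 2) by (apply Hc; rewrite ?dist_self; auto; lra).
    assert (d (F m y) (F s z) < e / 2) by (apply Hc; auto; lra).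
    pose proof (dist_triangle X d Hmet (F s y) (F m y) (F s z)).
    rewrite (dist_sym X d Hmet (F s y) (F m y)) in *; lra. }
  destruct (Rle_dec 1 (m + del / 2)) as [H1 | H1].
  - unfold v in Hv; rewrite Rmin_left in Hv; auto.
  - assert (m + del / 2 <= m); [|lra].
    apply Hub; split; [lra|]. unfold v in Hv; rewrite Rmin_right in Hv; auto; lra.
Qed.

Lemma semiflow_uniformly_equicontinuous : compact_space X d ->
  forall e, 0 < e -> exists del, 0 < del /\
  forall z w, d z w < del -> forall s, 0 <= s <= 1 -> d (F s z) (F s w) < e.
Proof.
  intros Hcpt e He.
  set (I := {p : X * R | 0 < snd p /\ forall z, d (fst p) z < snd p ->
    forall s, 0 <= s <= 1 -> d (F s (fst p)) (F s z) < e / 2}).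
  destruct (Hcpt I (fun i z => d (fst (proj1_sig i)) z < snd (proj1_sig i) / 2))
    as [l Hl].
  - intros i; apply ball_open, Hmet.
  - intros x. destruct (semiflow_equicontinuous_at x (e / 2) ltac:(lra)) as [r [Hr Hx]].
    exists (exist _ (x, r) (conj Hr Hx)); simpl. rewrite dist_self; auto; lra.
  - destruct (list_pos_lower_bound (map (fun i => snd (proj1_sig i) / 2) l))
      as [del [Hdel Hlow]].
    { intros r Hr. apply in_map_iff in Hr as [[[y r'] Hpos] [Heq _]]; simpl in *; lra. }
    exists del; split; auto. intros z w Hzw s Hs.
    destruct (Hl z) as [[[y r] [Hr Hy]] [Hin Hz]]; simpl in *.
    pose proof (Hlow _ (in_map (fun i => snd (proj1_sig i) / 2) _ _ Hin)); simpl in *.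
    pose proof (dist_triangle X d Hmet y z w).
    pose proof (Hy z ltac:(lra) s Hs); pose proof (Hy w ltac:(lra) s Hs).
    pose proof (dist_triangle X d Hmet (F s z) (F s y) (F s w)).
    rewrite (dist_sym X d Hmet (F s z) (F s y)) in *; lra.
Qed.

End Semiflow.

Fixpoint psum (ts : nat -> R) (k : nat) : R :=
  match k with O => 0 | S k => psum ts k + ts k end.

(* For increasing s with s 0 = 0 <= t, the index k of the segment [s k, s (S k)) containing t. *)
Fixpoint count_le (s : nat -> R) (n : nat) (t : R) : nat :=
  match n with
  | O => O
  | S n => (count_le s n t + if Rle_dec (s (S n)) t then 1 else 0)%nat
  end.

(* The last segment [s N, oo) is unbounded. *)
Definition in_segment (s : nat -> R) (N k : nat) (t : R) : Prop :=
  (k <= N)%nat /\ s k <= t /\ ((k < N)%nat -> t < s (S k)).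

Section PartialSums.
Variables (ts : nat -> R) (N : nat).
Hypothesis ts_ge1 : forall i, (i < N)%nat -> 1 <= ts i.

Lemma psum_gap i j : (i <= j <= N)%nat -> psum ts i + INR (j - i) <= psum ts j.
Proof.
  intros Hij. remember (j - i)%nat as m eqn:Hm. revert j Hij Hm.
  induction m as [|m IH]; intros j Hij Hm.
  - replace j with i by lia; simpl; lra.
  - destruct j as [|j]; [lia|]. rewrite S_INR; simpl.
    pose proof (IH j ltac:(lia) ltac:(lia)); pose proof (ts_ge1 j ltac:(lia)); lra.
Qed.

Lemma psum_le i j : (i <= j <= N)%nat -> psum ts i <= psum ts j.
Proof. intros Hij; pose proof (psum_gap i j Hij); pose proof (pos_INR (j - i)); lra. Qed.

Lemma count_le_segment k t : in_segment (psum ts) N k t -> count_le (psum ts) N t = k.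
Proof.
  intros [HkN [Hk Hk1]].
  enough (forall n, (n <= N)%nat -> count_le (psum ts) n t = Nat.min n k) as ->
    by (auto; lia).
  induction n as [|n IH]; intros Hn; [reflexivity|]. cbn [count_le]; rewrite IH by lia.
  destruct (Rle_dec (psum ts (S n)) t) as [Hle | Hgt].
  - destruct (le_lt_dec (S n) k); [lia|].
    pose proof (Hk1 ltac:(lia)); pose proof (psum_le (S k) (S n) ltac:(lia)); lra.
  - destruct (le_lt_dec (S n) k); [|lia].
    pose proof (psum_le (S n) k ltac:(lia)); lra.
Qed.

Lemma segment_exists t : 0 <= t -> exists k, in_segment (psum ts) N k t.
Proof.
  intros Ht.
  assert (Hbelow : forall n, (n <= N)%nat -> t < psum ts n ->
    exists k, (k < n)%nat /\ psum ts k <= t < psum ts (S k)).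
  { induction n as [|n IH]; intros Hn Htn; [simpl in Htn; lra|].
    destruct (Rlt_dec t (psum ts n)) as [Hlt | Hge].
    - destruct (IH ltac:(lia) Hlt) as [k [Hk Hkt]]; exists k; split; [lia | auto].
    - exists n; split; [lia | lra]. }
  destruct (Rlt_dec t (psum ts N)) as [Hlt | Hge].
  - destruct (Hbelow N (le_n N) Hlt) as [k [Hk Hkt]]. exists k; repeat split; lra || lia.
  - exists N; repeat split; lra || lia.
Qed.

Lemma segment_step k k' t tau : 0 <= tau <= 1 ->
  in_segment (psum ts) N k t -> in_segment (psum ts) N k' (t + tau) ->
  k' = k \/ (k < N)%nat /\ k' = S k.
Proof.
  intros Htau [HkN [Hk Hk1]] [HkN' [Hk' Hk1']].
  assert (Hkk' : (k <= k')%nat).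
  { destruct (le_lt_dec k k') as [|Hlt]; auto.
    pose proof (Hk1' ltac:(lia)); pose proof (psum_le (S k') k ltac:(lia)); lra. }
  destruct (Nat.eq_dec k' k) as [|Hne]; [now left|right].
  split; [lia|]. destruct (Nat.eq_dec k' (S k)) as [|Hne']; auto.
  pose proof (Hk1 ltac:(lia)); pose proof (psum_gap (S k) k' ltac:(lia)).
  pose proof (le_INR 1 (k' - S k) ltac:(lia)); simpl in *; lra.
Qed.

End PartialSums.

Section GluedOrbit.
Variables (X : Type) (d : X -> X -> R) (F : R -> X -> X).
Hypotheses (Hmet : is_metric X d) (Hsf : is_semiflow X d F).
Variables (N : nat) (xs : nat -> X) (ts : nat -> R).
Hypothesis ts_ge1 : forall i, (i < N)%nat -> 1 <= ts i.

(* Runs along the orbit of xs k during [psum ts k, psum ts (S k)), for k < N, and along the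
   orbit of xs N afterwards. *)
Definition glued_orbit (t : R) : X :=
  let k := count_le (psum ts) N t in F (t - psum ts k) (xs k).

Lemma glued_orbit_on_segment k t :
  in_segment (psum ts) N k t -> glued_orbit t = F (t - psum ts k) (xs k).
Proof. intros Hk; unfold glued_orbit; rewrite (count_le_segment ts N ts_ge1 k t Hk); auto. Qed.

Lemma glued_orbit_near k u e : (k < N)%nat -> psum ts k <= u <= psum ts (S k) -> 0 < e ->
  exists del, 0 < del /\ forall r, psum ts k <= r < psum ts (S k) -> Rabs (r - u) < del ->
  d (glued_orbit r) (F (u - psum ts k) (xs k)) < e.
Proof.
  intros Hk Hu He.
  destruct (semiflow_continuous X d F Hsf (u - psum ts k) (xs k) ltac:(lra) e He)
    as [del [Hdel Hc]].
  exists del; split; auto. intros r Hr Hru.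
  rewrite (glued_orbit_on_segment k r) by (repeat split; lra || lia).
  rewrite (dist_sym X d Hmet). apply Hc; [lra | | rewrite (dist_self X d Hmet); auto].
  replace (r - psum ts k - (u - psum ts k)) with (r - u) by ring; auto.
Qed.

Definition breaks : list R := map (psum ts) (seq 0 (S N)).

Lemma glued_orbit_cont_off_breaks t : 0 <= t <= psum ts N -> ~ In t breaks ->
  cont_within_at X d 0 (psum ts N) glued_orbit t.
Proof.
  intros Ht Hnin e He.
  assert (Hne : forall j, (j <= N)%nat -> t <> psum ts j).
  { intros j Hj ->; apply Hnin, in_map_iff; exists j; split; auto; apply in_seq; lia. }
  destruct (segment_exists ts N t ltac:(lra)) as [k Hseg].
  pose proof Hseg as [HkN [Hk Hk1]].
  assert (HkN' : (k < N)%nat)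
    by (destruct (Nat.eq_dec k N) as [->|]; [pose proof (Hne N (le_n N)); lra | lia]).
  specialize (Hk1 HkN'). pose proof (Hne k HkN).
  destruct (glued_orbit_near k t e HkN' ltac:(lra) He) as [del [Hdel Hc]].
  set (gap := Rmin (t - psum ts k) (psum ts (S k) - t)).
  assert (Hgap : 0 < gap) by (apply Rmin_glb_lt; lra).
  assert (gap <= t - psum ts k /\ gap <= psum ts (S k) - t)
    by (split; [apply Rmin_l | apply Rmin_r]).
  exists (Rmin del gap); split; [apply Rmin_glb_lt; lra|].
  intros r _ Hr. pose proof (Rmin_l del gap); pose proof (Rmin_r del gap).
  apply Rabs_def2 in Hr.
  rewrite (glued_orbit_on_segment k t Hseg). apply Hc; [lra | apply Rabs_def1; lra].
Qed.

Lemma glued_orbit_one_sided_limits p : In p breaks -> 0 <= p <= psum ts N ->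
  (0 < p -> left_limit_exists X d 0 glued_orbit p) /\
  (p < psum ts N -> right_limit_exists X d (psum ts N) glued_orbit p).
Proof.
  intros Hp _. apply in_map_iff in Hp as [j [<- Hj]]; apply in_seq in Hj.
  split; intros Hj'.
  - destruct j as [|k]; [simpl in Hj'; lra|]. pose proof (ts_ge1 k ltac:(lia)).
    exists (F (psum ts (S k) - psum ts k) (xs k)). intros e He.
    destruct (glued_orbit_near k (psum ts (S k)) e ltac:(lia) ltac:(simpl; lra) He)
      as [del [Hdel Hc]].
    exists (Rmin del (ts k)); split; [apply Rmin_glb_lt; lra|].
    intros r Hr Hr'. pose proof (Rmin_l del (ts k)); pose proof (Rmin_r del (ts k)).
    apply Hc; simpl in *; [lra | apply Rabs_def1; lra].
  - assert (Hj2 : (j < N)%nat) by (destruct (Nat.eq_dec j N) as [->|]; [lra | lia]).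
    pose proof (ts_ge1 j Hj2).
    exists (F (psum ts j - psum ts j) (xs j)). intros e He.
    destruct (glued_orbit_near j (psum ts j) e Hj2 ltac:(simpl; lra) He) as [del [Hdel Hc]].
    exists (Rmin del (ts j)); split; [apply Rmin_glb_lt; lra|].
    intros r Hr Hr'. pose proof (Rmin_l del (ts j)); pose proof (Rmin_r del (ts j)).
    apply Hc; simpl in *; [lra | apply Rabs_def1; lra].
Qed.

Lemma glued_orbit_piecewise_continuous :
  piecewise_continuous X d (psum ts N) glued_orbit.
Proof.
  exists breaks; split; [apply glued_orbit_cont_off_breaks | apply glued_orbit_one_sided_limits].
Qed.

Lemma glued_orbit_eps_close e del :
  (forall z w, d z w < del -> forall s, 0 <= s <= 1 -> d (F s z) (F s w) < e) ->
  (forall i, (i < N)%nat -> d (F (ts i) (xs i)) (xs (S i)) < del) -> 0 < e ->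
  eps_close X d F e (psum ts N) glued_orbit.
Proof.
  intros Hequi Hjump He tau t Htau Ht.
  destruct (segment_exists ts N t ltac:(lra)) as [k Hk].
  destruct (segment_exists ts N (t + tau) ltac:(lra)) as [k' Hk'].
  rewrite (glued_orbit_on_segment k t Hk), (glued_orbit_on_segment k' (t + tau) Hk').
  pose proof Hk as [_ [Hk0 Hk1]]; pose proof Hk' as [_ [Hk0' _]].
  destruct (segment_step ts N ts_ge1 k k' t tau Htau Hk Hk') as [-> | [HkN ->]].
  - rewrite <- (semiflow_add X d F Hsf) by (auto; lra).
    replace (tau + (t - psum ts k)) with (t + tau - psum ts k) by ring.
    rewrite (dist_self X d Hmet); auto.
  - specialize (Hk1 HkN). simpl in *. pose proof (ts_ge1 k HkN).
    rewrite <- (semiflow_add X d F Hsf) by (auto; lra).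
    replace (tau + (t - psum ts k)) with (t + tau - (psum ts k + ts k) + ts k) by ring.
    rewrite (semiflow_add X d F Hsf) by (auto; lra).
    apply Hequi; [rewrite (dist_sym X d Hmet); auto | lra].
Qed.

Lemma glued_orbit_start : glued_orbit 0 = xs 0%nat.
Proof.
  rewrite (glued_orbit_on_segment 0 0).
  - simpl; rewrite Rminus_0_r; apply (semiflow_zero X d F Hsf).
  - repeat split; simpl; [lia | lra | intros HN; pose proof (ts_ge1 0 HN); lra].
Qed.

Lemma glued_orbit_end : glued_orbit (psum ts N) = xs N.
Proof.
  rewrite (glued_orbit_on_segment N (psum ts N)) by (repeat split; lra || lia).
  rewrite Rminus_diag; apply (semiflow_zero X d F Hsf).
Qed.

End GluedOrbit.

Lemma shadow_chain_of_conley_chain (X : Type) (d : X -> X -> R) (F : R -> X -> X) e del x y :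
  is_metric X d -> is_semiflow X d F -> 0 < e ->
  (forall z w, d z w < del -> forall s, 0 <= s <= 1 -> d (F s z) (F s w) < e) ->
  conley_chain X d F del 1 x y -> shadow_chain X d F e x y.
Proof.
  intros Hmet Hsf He Hequi [N [xs [ts [HN [<- [<- Hch]]]]]].
  assert (Hts : forall i, (i < N)%nat -> 1 <= ts i) by (intros i Hi; apply Hch, Hi).
  exists (psum ts N), (glued_orbit X F N xs ts); repeat split.
  - pose proof (psum_gap ts N Hts 0 N ltac:(lia)); pose proof (le_INR 1 N HN).
    rewrite Nat.sub_0_r in *; simpl in *; lra.
  - apply (glued_orbit_piecewise_continuous X d F Hmet Hsf N xs ts Hts).
  - apply (glued_orbit_eps_close X d F Hmet Hsf N xs ts Hts e del Hequi); auto.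
    intros i Hi; apply Hch, Hi.
  - apply (glued_orbit_start X d F Hsf N xs ts Hts).
  - apply (glued_orbit_end X d F Hsf N xs ts Hts).
Qed.

Theorem proposition3p2 (X : Type) (d : X -> X -> R) (F : R -> X -> X)
  (Hmet : is_metric X d) (Hcpt : compact_space X d) (Hsf : is_semiflow X d F) :
  (forall x y : X, conley_le X d F x y -> shadow_le X d F x y) /\
  (forall x : X, R_C X d F x -> R_S X d F x).
Proof.
  assert (Hle : forall x y, conley_le X d F x y -> shadow_le X d F x y).
  { intros x y Hc e He.
    destruct (semiflow_uniformly_equicontinuous X d F Hmet Hsf Hcpt e He)
      as [del [Hdel Hequi]].
    apply (shadow_chain_of_conley_chain X d F e del); auto; apply Hc; lra. }
  split; [exact Hle|].
  intros x [Hfix | [y [Hxy Hyx]]]; [now left | right; exists y; split; apply Hle; auto].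
Qed.
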